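(* Let $H=(V,E_H)$ be a connected graph with $n=|V|\ge2$, edge weights $w$ and costs $c$. Suppose $F\subseteq E_H$ satisfies $c(F)\le B$, $H\setminus F$ is connected, and $p_H(F)=P>0$. Then there exist an edge $e=\{u,v\}\in E_H$ and a value $W\in\{w(f):f\in E_H\}$ such that, letting $C$ be a minimum-cost set of edges of $H_W=(V,\{f\in E_H:w(f)<W\})$ whose removal separates $u$ from $v$ in $H_W$, we have $0<c(C)\le B$ and $$\frac{W-w(e)}{c(C)}\ge\frac{P}{2B\log n}.$$ (Such a $C$ is a partial cut $C_H(S,W)$ with $e$ crossing $C_H(S)$.)
   Context: $w:E_H\to\mathbb{R}_{\ge0}$, $c:E_H\to\mathbb{R}_{>0}$, $c(D)=\sum_{f\in D}c(f)$, $H\setminus D=(V,E_H\setminus D)$. $\mathrm{MST}(\cdot)$ is minimum spanning tree weight w.r.t. $w$ ($\infty$ for disconnected graphs), and $p_H(D)=\mathrm{MST}(H\setminus D)-\mathrm{MST}(H)$. Partial cut: $C_H(S,W)=\{e\in E_H:|e\cap S|=1,\ w(e)<W\}$ for $\emptyset\ne S\subsetneq V$. $\log=\log_2$. *)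

From HB Require Import structures.
From mathcomp Require Import all_boot all_order all_algebra.
From mathcomp Require Import reals exp.
Set Implicit Arguments. Unset Strict Implicit. Unset Printing Implicit Defensive.
Import Order.TTheory GRing.Theory Num.Theory.
Local Open Scope ring_scope.

Section Graphs.
Variable V : finType.

Definition simple_edges (D : {set {set V}}) : bool :=
  [forall e in D, #|e| == 2%N].

Definition adj (D : {set {set V}}) : rel V := fun a b => [set a; b] \in D.

Definition gconn (D : {set {set V}}) (u v : V) : bool := connect (adj D) u v.

Definition gconnected (D : {set {set V}}) : bool := [forall u, forall v, gconn D u v].

Definition spanning_tree (D T : {set {set V}}) : bool :=
  [&& T \subset D, gconnected T & [forall e in T, ~~ gconnected (T :\ e)]].

Variable R : realType.

Definition setw (w : {set V} -> R) (T : {set {set V}}) : R := \sum_(f in T) w f.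

(* Only meaningful when (V, D) is connected
   (the paper's value is +oo otherwise; here a junk value 0 is used, and all
   uses in the main theorem are on connected graphs). *)
Definition MST (w : {set V} -> R) (D : {set {set V}}) : R :=
  match [pick T | spanning_tree D T] with
  | Some T0 => \big[Num.min/setw w T0]_(T | spanning_tree D T) setw w T
  | None => 0
  end.

Definition pH (w : {set V} -> R) (E D : {set {set V}}) : R :=
  MST w (E :\: D) - MST w E.

Definition edges_below (w : {set V} -> R) (E : {set {set V}}) (W : R) :=
  [set f in E | w f < W].

Definition separating (D C : {set {set V}}) (u v : V) : bool :=
  (C \subset D) && ~~ gconn (D :\: C) u v.

Definition min_cost_sep (c : {set V} -> R) (D C : {set {set V}}) (u v : V) : Prop :=
  separating D C u v /\
  forall C', separating D C' u v -> setw c C <= setw c C'.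

End Graphs.

Definition log2 {R : realType} (x : R) : R := ln x / ln 2.

(* Run Kruskal's algorithm on G = H \ F: each step joins two components X and Y
   of the current forest along an edge e of G.  Counting, at every threshold s,
   the spanning-tree edges of H of weight >= s against the merges that no edge
   of H below s could have performed gives MST(H) >= sum_e t_e, where t_e is the
   larger of the lightest weights of an H-edge leaving X and leaving Y; since
   MST(G) <= sum_e w(e), we get P <= sum_e (w(e) - t_e).  The potential
   sum_x deg_F(x) log2 |comp(x)|, with deg_F(x) the F-cost at x, rises at each
   merge by at least min(deg_F(X), deg_F(Y)) and ends at 2 c(F) log2 n, so some
   merge has w(e) - t_e > 0 and at least P/(2B log2 n) times that minimum.  For
   S the cheaper side, below W = w(e) only edges of F leave S, so the lightest
   H-edge leaving S is separated in H_W by a cut of cost at most min(deg_F(S), B). *)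

From HB Require Import structures.
From mathcomp Require Import all_boot all_order all_algebra.
From mathcomp Require Import reals exp.
From mathcomp Require Import zify lra.
Set Implicit Arguments. Unset Strict Implicit. Unset Printing Implicit Defensive.
Import Order.TTheory GRing.Theory Num.Theory.

Section Connectivity.
Variable V : finType.
Implicit Types (D : {set {set V}}) (S : {set V}) (x y z a b : V).

Lemma adj_sym D : symmetric (adj D).
Proof. by move=> x y; rewrite /adj setUC. Qed.

Lemma gconn_sym D : connect_sym (adj D).
Proof. exact/sym_connect_sym/adj_sym. Qed.

Lemma gconnC D x y : gconn D x y = gconn D y x.
Proof. by rewrite /gconn gconn_sym. Qed.

Lemma gconn_refl D x : gconn D x x.
Proof. exact: connect0. Qed.

Lemma gconn_trans D x y z : gconn D x y -> gconn D y z -> gconn D x z.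
Proof. exact: connect_trans. Qed.

Lemma gconn_edge D x y : [set x; y] \in D -> gconn D x y.
Proof. exact: connect1. Qed.

Lemma gconnS D D' x y : D \subset D' -> gconn D x y -> gconn D' x y.
Proof.
by move=> sDD'; apply: connect_sub => u v uv; apply/connect1/(subsetP sDD').
Qed.

Lemma gconnectedP D : reflect (forall x y, gconn D x y) (gconnected D).
Proof.
apply: (iffP forallP) => [h x y|h x]; first exact: (forallP (h x)).
by apply/forallP.
Qed.

Lemma closed_gconn D S x y :
  (forall u v, adj D u v -> u \in S -> v \in S) -> x \in S -> y \notin S ->
  ~~ gconn D x y.
Proof.
move=> clS xS yS; apply/negP => cxy.
have cl : closed (adj D) (mem S) by apply: intro_closed; [exact: gconn_sym|].
by move: (closed_connect cl cxy); rewrite xS (negbTE yS).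
Qed.

Lemma set2_inj x y a b : [set x; y] = [set a; b] ->
  [/\ x = a & y = b] \/ [/\ x = b & y = a] \/ x = y.
Proof.
move=> exy.
have xab : x \in [set a; b] by rewrite -exy set21.
have yab : y \in [set a; b] by rewrite -exy set22.
have axy : a \in [set x; y] by rewrite exy set21.
have bxy : b \in [set x; y] by rewrite exy set22.
move: xab yab axy bxy; rewrite !inE.
by do 2 case/orP=> /eqP->; rewrite ?eqxx /=; auto.
Qed.

Lemma gconn_setU1 D a b x y :
  gconn (D :|: [set [set a; b]]) x y ->
  [|| gconn D x y, gconn D x a && gconn D b y | gconn D x b && gconn D a y].
Proof.
pose Z := [pred y | [|| gconn D x y, gconn D x a && gconn D b y
                    | gconn D x b && gconn D a y]].
have cl : closed (adj (D :|: [set [set a; b]])) Z.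
  apply: intro_closed; first exact: gconn_sym.
  move=> u v; rewrite /adj in_setU in_set1 => /orP[/gconn_edge cuv|/eqP/set2_inj].
    rewrite !inE => /or3P[h|/andP[h1 h2]|/andP[h1 h2]].
    - by rewrite (gconn_trans h cuv).
    - by rewrite h1 (gconn_trans h2 cuv) orbT.
    - by rewrite h1 (gconn_trans h2 cuv) !orbT.
  case=> [[-> ->]|[[-> ->]|->]] //; rewrite !inE;
    by case/or3P=> [h|/andP[h _]|/andP[h _]]; rewrite h ?gconn_refl /= ?orbT.
by move/(closed_connect cl); rewrite !inE gconn_refl => <-.
Qed.

End Connectivity.

Section Components.
Variable V : finType.
Implicit Types (D : {set {set V}}) (x y z a b : V).

Definition gcomp D x : {set V} := [set y | gconn D x y].
Definition components D : {set {set V}} := [set gcomp D x | x in [set: V]].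
Definition ncomp D : nat := #|components D|.

Lemma mem_gcomp D x y : (y \in gcomp D x) = gconn D x y.
Proof. by rewrite inE. Qed.

Lemma gcomp_refl D x : x \in gcomp D x.
Proof. by rewrite mem_gcomp gconn_refl. Qed.

Lemma eq_gcomp D x y : (gcomp D x == gcomp D y) = gconn D x y.
Proof.
apply/eqP/idP => [exy|cxy]; first by rewrite -mem_gcomp exy gcomp_refl.
apply/setP => z; rewrite !mem_gcomp; apply/idP/idP; last exact: gconn_trans.
by apply: gconn_trans; rewrite gconnC.
Qed.

Lemma gcomp_gconnected D x : gconnected D -> gcomp D x = setT.
Proof. by move/gconnectedP=> cD; apply/setP => y; rewrite mem_gcomp inE cD. Qed.

Lemma gcomp_set0 x : gcomp set0 x = [set x].
Proof.
apply/setP => y; rewrite mem_gcomp inE; apply/idP/eqP => [|->]; last exact: gconn_refl.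
by case/connectP=> [[|z p] /=]; rewrite ?[adj _ _ _]inE.
Qed.

Definition gcomp_join D' (C : {set V}) : {set V} := \bigcup_(z in C) gcomp D' z.

Lemma gcomp_joinE D D' x : D \subset D' -> gcomp_join D' (gcomp D x) = gcomp D' x.
Proof.
move=> sDD'; apply/setP => y; apply/bigcupP/idP => [[z]|cxy].
  by rewrite !mem_gcomp => /(gconnS sDD'); apply: gconn_trans.
by exists x; rewrite ?gcomp_refl.
Qed.

Lemma componentsS D D' : D \subset D' -> components D' = gcomp_join D' @: components D.
Proof.
by move=> sDD'; rewrite /components -imset_comp; apply: eq_imset => x /=; rewrite gcomp_joinE.
Qed.

Lemma ncompS D D' : D \subset D' -> (ncomp D' <= ncomp D)%N.
Proof. by move=> sDD'; rewrite /ncomp (componentsS sDD') leq_imset_card. Qed.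

Lemma ncomp_setU1_lt D a b : ~~ gconn D a b ->
  (ncomp (D :|: [set [set a; b]]) < ncomp D)%N.
Proof.
move=> nab; set D' := _ :|: _; have sDD' : D \subset D' := subsetUl _ _.
rewrite /ncomp (componentsS sDD') ltn_neqAle leq_imset_card andbT.
apply: contra nab => /imset_injP inj.
have gcomp_in z : gcomp D z \in components D by apply: imset_f; rewrite inE.
rewrite -eq_gcomp; apply/eqP/inj; rewrite ?gcomp_in // !gcomp_joinE //.
by apply/eqP; rewrite eq_gcomp; apply: gconn_edge; rewrite !inE eqxx orbT.
Qed.

Lemma ncomp_setU1_ge D a b : (ncomp D <= (ncomp (D :|: [set [set a; b]])).+1)%N.
Proof.
set D' := _ :|: _; have sDD' : D \subset D' := subsetUl _ _.
rewrite /ncomp (cardsD1 (gcomp D b) (components D)) addnC -addn1 leq_add ?leq_b1 //.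
have inj : {in components D :\ gcomp D b &, injective (gcomp_join D')}.
  move=> C1 C2 /setD1P[nb1 /imsetP[x _ eC1]] /setD1P[nb2 /imsetP[y _ eC2]]; subst C1 C2.
  rewrite !gcomp_joinE // => /eqP; rewrite eq_gcomp => /gconn_setU1.
  case/or3P=> [cxy|/andP[_ cby]|/andP[cxb _]]; first by apply/eqP; rewrite eq_gcomp.
  - by move: nb2; rewrite eq_gcomp gconnC cby.
  - by move: nb1; rewrite eq_gcomp cxb.
rewrite -(card_in_imset inj) (componentsS sDD').
exact/subset_leq_card/imsetS/subD1set.
Qed.

Lemma ncomp_gt0 D x : (0 < ncomp D)%N.
Proof. by apply/card_gt0P; exists (gcomp D x); apply: imset_f; rewrite inE. Qed.

Lemma ncomp_gconnected D x : gconnected D -> ncomp D = 1%N.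
Proof.
move=> cD; apply/eqP/cards1P; exists setT; apply/setP => C; rewrite inE.
apply/imsetP/eqP => [[y _ ->]|->]; first exact: gcomp_gconnected.
by exists x; rewrite ?inE ?gcomp_gconnected.
Qed.

Lemma ncomp_set0 : ncomp set0 = #|V|.
Proof.
rewrite /ncomp /components (eq_imset _ gcomp_set0) card_in_imset ?cardsT //.
by move=> x y _ _ /set1_inj.
Qed.

End Components.

Section Forests.
Variable V : finType.
Implicit Types (D T A : {set {set V}}) (a b : V).

Lemma simple_edgesS D D' : D \subset D' -> simple_edges D' -> simple_edges D.
Proof.
move=> sDD' /forall_inP sD'; apply/forall_inP => f fD; exact/sD'/(subsetP sDD').
Qed.

Lemma simple_edgesP D f : simple_edges D -> f \in D -> exists a b, f = [set a; b].
Proof.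
by move=> /forall_inP sD /sD /cards2P[a [b [_ ->]]]; exists a, b.
Qed.

Lemma card_le_ncomp D : simple_edges D -> (#|V| <= ncomp D + #|D|)%N.
Proof.
have [n] := ubnP #|D|; elim: n D => // n IH D /ltnSE leDn sD.
have [->|[f fD]] := set_0Vmem D.
  by rewrite ncomp_set0 cards0 addn0.
have ltD : (#|D :\ f| < #|D|)%N by rewrite (cardsD1 f D) fD.
have [a [b ef]] := simple_edgesP sD fD.
have := ncomp_setU1_ge (D :\ f) a b; rewrite -ef setUC setD1K // => le.
apply: leq_trans (IH _ (leq_trans ltD leDn) (simple_edgesS (subD1set D f) sD)) _.
by rewrite (cardsD1 f D) fD; lia.
Qed.

Lemma bridge_not_gconn T e a b : gconnected T -> ~~ gconnected (T :\ e) ->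
  e = [set a; b] -> ~~ gconn (T :\ e) a b.
Proof.
move=> /gconnectedP cT ncT ee; subst e; apply: contra ncT => cab.
apply/gconnectedP => x y; apply: connect_sub (cT x y) => u v uvT.
have [euv|neuv] := eqVneq [set u; v] [set a; b]; last first.
  by apply: connect1; rewrite /adj in_setD1 neuv.
case: (set2_inj euv) => [[-> ->]|[[-> ->]|->]] //.
by rewrite -[connect _ b a]/(gconn _ b a) gconnC.
Qed.

Lemma ncomp_forest D T A : spanning_tree D T -> A \subset T ->
  simple_edges A -> (ncomp A + #|A| <= #|V|)%N.
Proof.
case/and3P=> _ cT /forall_inP bT; have [n] := ubnP #|A|.
elim: n A => // n IH A /ltnSE leAn sAT sA.
have [->|[f fA]] := set_0Vmem A; first by rewrite ncomp_set0 cards0 addn0.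
have ltA : (#|A :\ f| < #|A|)%N by rewrite (cardsD1 f A) fA.
have [a [b ef]] := simple_edgesP sA fA.
have fT : f \in T := subsetP sAT f fA.
have nab : ~~ gconn (A :\ f) a b.
  apply: contra (bridge_not_gconn cT (bT f fT) ef); exact/gconnS/setSD.
have := ncomp_setU1_lt nab; rewrite -ef setUC setD1K // => lt.
have sAfA := subD1set A f.
have := IH _ (leq_trans ltA leAn) (subset_trans sAfA sAT) (simple_edgesS sAfA sA).
by rewrite (cardsD1 f A) fA; lia.
Qed.

End Forests.

Section Kruskal.
Variable V : finType.
Implicit Types (A X : {set {set V}}) (p : V * V) (ps : seq (V * V)).

Definition edge_of p : {set V} := [set p.1; p.2].

Definition kruskal_step A p :=
  if gconn A p.1 p.2 then A else A :|: [set edge_of p].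

Fixpoint kruskal A ps :=
  if ps is p :: ps' then kruskal (kruskal_step A p) ps' else A.

Fixpoint kruskal_merges A ps : seq ({set {set V}} * (V * V)) :=
  if ps is p :: ps' then
    (if gconn A p.1 p.2 then [::] else [:: (A, p)]) ++
    kruskal_merges (kruskal_step A p) ps'
  else [::].

Lemma kruskal_step_sub A p : A \subset kruskal_step A p.
Proof. by rewrite /kruskal_step; case: ifP => // _; apply: subsetUl. Qed.

Lemma kruskal_step_gconn A p : gconn (kruskal_step A p) p.1 p.2.
Proof.
rewrite /kruskal_step; case: ifP => // _.
by apply/gconn_edge; rewrite in_setU in_set1 eqxx orbT.
Qed.

Lemma kruskal_sub A ps : A \subset kruskal A ps.
Proof.
by elim: ps A => //= p ps IH A; apply: subset_trans (kruskal_step_sub A p) (IH _).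
Qed.

Lemma kruskal_gconn A ps p : p \in ps -> gconn (kruskal A ps) p.1 p.2.
Proof.
elim: ps A => //= p' ps IH A; rewrite inE => /predU1P[->|]; last exact: IH.
exact: gconnS (kruskal_sub _ _) (kruskal_step_gconn A p').
Qed.

Lemma kruskal_edges A ps f :
  f \in kruskal A ps -> f \in A \/ exists2 p, p \in ps & f = edge_of p.
Proof.
elim: ps A => /= [|p ps IH] A; first by left.
case/IH=> [|[q qps ->]]; last by right; exists q; rewrite // inE qps orbT.
rewrite /kruskal_step; case: ifP => _; first by left.
by rewrite in_setU in_set1 => /orP[|/eqP->]; [left|right; exists p; rewrite ?mem_head].
Qed.

Lemma mem_kruskal_merges A ps A' p : (A', p) \in kruskal_merges A ps ->
  [/\ ~~ gconn A' p.1 p.2, p \in ps & A \subset A'].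
Proof.
elim: ps A => //= p' ps IH A; rewrite mem_cat => /orP[|/IH[h1 h2 h3]].
  by case: ifP => //= c; rewrite inE => /eqP[-> ->]; rewrite c mem_head.
by split; rewrite ?inE ?h2 ?orbT //; apply: subset_trans (kruskal_step_sub _ _) h3.
Qed.

Lemma count_kruskal_merges_lt_ncomp (P : pred ({set {set V}} * (V * V))) X A ps (x0 : V) :
  (forall A' p, ~~ gconn A' p.1 p.2 -> P (A', p) -> ~~ gconn (A' :|: X) p.1 p.2) ->
  (count P (kruskal_merges A ps) < ncomp (A :|: X))%N.
Proof.
move=> sepX; elim: ps A => /= [|p ps IH] A; first exact: ncomp_gt0 x0.
rewrite count_cat; case: ifP => c /=; first by move: (IH A); rewrite /kruskal_step c.
have := IH (kruskal_step A p); rewrite /kruskal_step c setUAC addn0.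
case Pm : (P (A, p)) => /= lt.
  by apply: leq_ltn_trans lt _; apply/ncomp_setU1_lt/sepX; rewrite ?c ?Pm.
exact/(leq_trans lt)/ncompS/subsetUl.
Qed.

Lemma kruskal_ncomp_card A ps :
  (ncomp (kruskal A ps) + #|kruskal A ps| <= ncomp A + #|A|)%N.
Proof.
elim: ps A => //= p ps IH A; apply: leq_trans (IH _) _.
rewrite /kruskal_step; case: ifPn => // nc.
have nin : edge_of p \notin A by apply: contra nc; apply: gconn_edge.
have -> : #|A :|: [set edge_of p]| = #|A|.+1 by rewrite setUC cardsU1 nin.
by rewrite addnS -addSn leq_add2r; apply: ncomp_setU1_lt.
Qed.

End Kruskal.

Local Open Scope ring_scope.

Section KruskalWeighted.
Variables (R : realType) (V : finType) (w : {set V} -> R).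
Implicit Types (D A : {set {set V}}) (p q : V * V) (ps : seq (V * V)).

Definition edge_wle p q := w (edge_of p) <= w (edge_of q).

(* Each edge occurs once per orientation; the second occurrence is never merged. *)
Definition sorted_pairs D :=
  sort edge_wle [seq p <- enum [set: V * V] | edge_of p \in D].

Lemma mem_sorted_pairs D p : (p \in sorted_pairs D) = (edge_of p \in D).
Proof. by rewrite mem_sort mem_filter mem_enum inE andbT. Qed.

Lemma sorted_pairs_sorted D : sorted edge_wle (sorted_pairs D).
Proof. by apply: sort_sorted => p q; apply: le_total. Qed.

(* Lighter pairs come earlier, so they are already connected at the merge. *)
Lemma kruskal_merges_sorted ps A A' p :
  sorted edge_wle ps -> (A', p) \in kruskal_merges A ps ->
  forall q, q \in ps -> w (edge_of q) < w (edge_of p) -> gconn A' q.1 q.2.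
Proof.
elim: ps A => //= p' ps IH A srt.
have srt' : sorted edge_wle ps := path_sorted srt.
have minp' : all (edge_wle p') ps.
  by apply: order_path_min srt => ? ? ?; apply: le_trans.
rewrite mem_cat => /orP[|m q].
  case: ifP => //= _; rewrite inE => /eqP[-> ->] q.
  rewrite inE => /predU1P[->|qps]; first by rewrite ltxx.
  by rewrite ltNge -/(edge_wle p' q) (allP minp' q qps).
have [_ _ sA'] := mem_kruskal_merges m.
rewrite inE => /predU1P[->|qps lt]; last exact: IH srt' m q qps lt.
by move=> _; apply: gconnS sA' (kruskal_step_gconn A p').
Qed.

Definition kruskal_tree D := kruskal set0 (sorted_pairs D).

Lemma kruskal_tree_sub D : kruskal_tree D \subset D.
Proof.
apply/subsetP => f /kruskal_edges[|[p]]; first by rewrite inE.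
by rewrite mem_sorted_pairs => pD ->.
Qed.

Lemma spanning_tree_kruskal D : simple_edges D -> gconnected D ->
  spanning_tree D (kruskal_tree D).
Proof.
move=> sD cD; have sT := kruskal_tree_sub D.
have cT : gconnected (kruskal_tree D).
  apply/gconnectedP => x y; apply: connect_sub ((gconnectedP _ cD) x y) => u v uv.
  by apply: (@kruskal_gconn _ set0 _ (u, v)); rewrite mem_sorted_pairs.
apply/and3P; split => //; apply/forall_inP => e eT; apply/negP => cTe.
have [x0 [_ _]] := simple_edgesP sD (subsetP sT e eT).
have := kruskal_ncomp_card set0 (sorted_pairs D).
rewrite -/(kruskal_tree D) ncomp_set0 cards0 addn0 (ncomp_gconnected x0 cT).
have := card_le_ncomp (simple_edgesS (subset_trans (subD1set _ e) sT) sD).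
by rewrite (ncomp_gconnected x0 cTe) (cardsD1 e (kruskal_tree D)) eT; lia.
Qed.

Lemma setw_kruskal A ps :
  setw w (kruskal A ps) = setw w A + \sum_(m <- kruskal_merges A ps) w (edge_of m.2).
Proof.
elim: ps A => /= [|p ps IH] A; first by rewrite big_nil addr0.
rewrite IH big_cat /= /kruskal_step; case: ifPn => nc; first by rewrite big_nil add0r.
have nin : edge_of p \notin A by apply: contra nc; apply: gconn_edge.
by rewrite /setw setUC big_setU1 //= big_seq1 addrA [w _ + _]addrC.
Qed.

Lemma setw_kruskal_tree D :
  setw w (kruskal_tree D) =
  \sum_(m <- kruskal_merges set0 (sorted_pairs D)) w (edge_of m.2).
Proof. by rewrite setw_kruskal /setw big_set0 add0r. Qed.

End KruskalWeighted.

Section MSTBounds.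
Variables (R : realType) (V : finType) (w : {set V} -> R).
Implicit Types (D T : {set {set V}}).

Lemma MST_le D T : spanning_tree D T -> MST w D <= setw w T.
Proof.
by move=> sT; rewrite /MST; case: pickP => [T0 _|/(_ T)]; [exact: bigmin_le_cond|rewrite sT].
Qed.

Lemma le_MST D L : (exists T, spanning_tree D T) ->
  (forall T, spanning_tree D T -> L <= setw w T) -> L <= MST w D.
Proof.
move=> [T sT] lbL; rewrite /MST; case: pickP => [T0 sT0|/(_ T)]; last by rewrite sT.
exact: le_bigmin (lbL _ sT0) lbL.
Qed.

End MSTBounds.

Lemma ler_sum_count_ge (R : realDomainType) (xs ys : seq R) :
  (forall x, x \in xs -> 0 <= x) ->
  (forall s, (count (>= s) ys <= count (>= s) xs)%N) ->
  \sum_(y <- ys) y <= \sum_(x <- xs) x.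
Proof.
have [n] := ubnP (size ys); elim: n xs ys => // n IH xs ys /ltnSE le_ys_n xs_ge0 cnt.
case: ys => [|y1 ys'] in le_ys_n cnt *; first by rewrite big_nil big_seq sumr_ge0.
set ys := y1 :: ys' in le_ys_n cnt *.
pose y0 := \big[Num.max/y1]_(y <- ys') y.
have y0_max y : y \in ys -> y <= y0.
  by rewrite inE => /predU1P[->|yys]; [exact: bigmax_ge_id|exact: le_bigmax_seq].
have y0_ys : y0 \in ys.
  rewrite /y0 big_seq; elim/big_ind: _ => [|a b|y]; rewrite ?mem_head //.
    by move=> ? ?; rewrite maxEle; case: ifP.
  by move=> yys; rewrite inE yys orbT.
have [x0 x0_xs le_y0x0] : exists2 x0, x0 \in xs & y0 <= x0.
  apply/hasP; rewrite has_count; apply: leq_trans (cnt y0).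
  by rewrite -has_count; apply/hasP; exists y0.
rewrite (perm_big _ (perm_to_rem y0_ys)) (perm_big _ (perm_to_rem x0_xs)) !big_cons.
apply: lerD => //; apply: IH => [||s].
- by move: le_ys_n; rewrite size_rem.
- by move=> x /mem_rem; apply: xs_ge0.
have [le_sy0|lt_y0s] := leP s y0.
  rewrite !count_rem y0_ys x0_xs /= le_sy0 (le_trans le_sy0 le_y0x0).
  by apply: leq_sub2r; apply: cnt.
suff -> : count (>= s) (rem y0 ys) = 0%N by [].
apply/eqP; rewrite -leqn0 leqNgt -has_count.
by apply/hasP => -[y /mem_rem /y0_max le_yy0]; rewrite /= leNgt (le_lt_trans le_yy0).
Qed.

Section MergeThresholds.
Variables (R : realType) (V : finType) (w : {set V} -> R) (E : {set {set V}}).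
Implicit Types (A T : {set {set V}}) (S : {set V}) (x u v : V) (s d : R) (ps : seq (V * V)).

Definition cross_edges S := [set f in E | (f :&: S != set0) && (f :\: S != set0)].

(* Capped at [d], which is also the value when no edge of [E] leaves [S]. *)
Definition min_cross_weight d S := \big[Num.min/d]_(f in cross_edges S) w f.

Definition merge_threshold (m : {set {set V}} * (V * V)) :=
  let d := w (edge_of m.2) in
  Num.max (min_cross_weight d (gcomp m.1 m.2.1)) (min_cross_weight d (gcomp m.1 m.2.2)).

Lemma cross_edgesP S u v :
  [set u; v] \in E -> u \in S -> v \notin S -> [set u; v] \in cross_edges S.
Proof.
move=> uvE uS vS; rewrite inE uvE /=; apply/andP; split; apply/set0Pn.
  by exists u; rewrite !inE eqxx uS.
by exists v; rewrite !inE eqxx orbT vS.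
Qed.

Lemma gcomp_closed_below A x d s : s <= min_cross_weight d (gcomp A x) ->
  forall u v, adj (A :|: edges_below w E s) u v -> u \in gcomp A x -> v \in gcomp A x.
Proof.
move=> /bigmin_geP[_ lb] u v; rewrite /adj in_setU => /orP[uvA|].
  by rewrite !mem_gcomp => /gconn_trans; apply; apply: gconn_edge.
rewrite inE => /andP[uvE lt] uS; apply/negPn/negP => vS.
by move: (lb _ (cross_edgesP uvE uS vS)); rewrite leNgt lt.
Qed.

Lemma count_merge_threshold_lt ps s (x0 : V) :
  (count (fun m => s <= merge_threshold m)%R (kruskal_merges set0 ps)
     < ncomp (edges_below w E s))%N.
Proof.
rewrite -[edges_below _ _ _]set0U; apply: (count_kruskal_merges_lt_ncomp set0 ps x0) => A p nc.
rewrite /merge_threshold le_max => /orP[] /gcomp_closed_below cl.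
  by apply: (closed_gconn cl); rewrite ?gcomp_refl ?mem_gcomp.
by rewrite gconnC; apply: (closed_gconn cl); rewrite ?gcomp_refl ?mem_gcomp 1?gconnC.
Qed.

Lemma ncomp_below_le T s (x0 : V) : simple_edges E -> spanning_tree E T ->
  (ncomp (edges_below w E s) <= #|[set f in T | (s <= w f)%R]| + 1)%N.
Proof.
move=> sE sT; have /and3P[sTE cT _] := sT.
set Ts := [set f in T | w f < s].
have sTsT : Ts \subset T by apply/subsetP => f; rewrite inE => /andP[].
have := ncomp_forest sT sTsT (simple_edgesS (subset_trans sTsT sTE) sE).
have := card_le_ncomp (simple_edgesS sTE sE); rewrite (ncomp_gconnected x0 cT).
have : (ncomp (edges_below w E s) <= ncomp Ts)%N.
  apply: ncompS; apply/subsetP => f; rewrite !inE => /andP[fT ->].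
  by rewrite (subsetP sTE).
have : (#|Ts| + #|[set f in T | (s <= w f)%R]|)%N = #|T|.
  rewrite -(cardsID [set f | w f < s] T); congr (_ + _)%N; apply: eq_card => f.
    by rewrite !inE andbC.
  by rewrite !inE andbC leNgt.
lia.
Qed.

(* At threshold [s], merges with threshold [>= s] are fewer than the components
   of [H_s], hence at most the edges of weight [>= s] of any spanning tree. *)
Lemma sum_merge_threshold_le_MST ps (x0 : V) : simple_edges E -> gconnected E ->
  (forall f, f \in E -> 0 <= w f) ->
  \sum_(m <- kruskal_merges set0 ps) merge_threshold m <= MST w E.
Proof.
move=> sE cE w_ge0; apply: le_MST.
  by exists (kruskal_tree w E); apply: spanning_tree_kruskal.
move=> T sT; have /and3P[sTE _ _] := sT.
rewrite /setw -big_enum /= -(big_map merge_threshold xpredT idfun) -(big_map w xpredT idfun).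
apply: ler_sum_count_ge => [x /mapP[f + ->]|s].
  by rewrite mem_enum => /(subsetP sTE) /w_ge0.
rewrite !count_map.
have -> : count (preim w (>= s)) (enum T) = #|[set f in T | s <= w f]|.
  rewrite -size_filter cardE; apply/perm_size/uniq_perm => [||f].
  - exact/filter_uniq/enum_uniq.
  - exact: enum_uniq.
  by rewrite mem_filter !mem_enum !inE andbC.
rewrite -(leq_add2r 1) addn1; apply: leq_trans (ncomp_below_le s x0 sE sT).
exact: count_merge_threshold_lt.
Qed.

End MergeThresholds.

Lemma pH_le_sum_merge_gaps (R : realType) (V : finType) (w : {set V} -> R)
    (E F : {set {set V}}) (x0 : V) :
  simple_edges E -> gconnected E -> (forall f, f \in E -> 0 <= w f) ->
  gconnected (E :\: F) ->
  pH w E F <= \sum_(m <- kruskal_merges set0 (sorted_pairs w (E :\: F)))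
                (w (edge_of m.2) - merge_threshold w E m).
Proof.
move=> sE cE w_ge0 cG; have sG := simple_edgesS (subsetDl E F) sE.
rewrite sumrB -setw_kruskal_tree /pH; apply: lerB.
  exact/MST_le/spanning_tree_kruskal.
exact: sum_merge_threshold_le_MST.
Qed.

Lemma log2_le (R : realType) (x y : R) : 0 < x -> x <= y -> log2 x <= log2 y.
Proof.
move=> x_gt0 le_xy; rewrite /log2 ler_pM2r ?invr_gt0 ?ln_gt0 ?ltr1n //.
by rewrite ler_ln ?posrE // (lt_le_trans x_gt0).
Qed.

(* The two gains add up to at least 1, because [2 x y <= (x + y)^2]. *)
Lemma min_le_log2_gain (R : realType) (a b : R) (x y : nat) :
  0 <= a -> 0 <= b -> (0 < x)%N -> (0 < y)%N ->
  Num.min a b <= a * (log2 (x + y)%:R - log2 x%:R) + b * (log2 (x + y)%:R - log2 y%:R).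
Proof.
move=> a_ge0 b_ge0 x_gt0 y_gt0.
have ln2_gt0 : 0 < ln (2 : R) by apply: ln_gt0; lra.
have x_pos : (0 : R) < x%:R by rewrite ltr0n.
have y_pos : (0 : R) < y%:R by rewrite ltr0n.
have xy_pos : (0 : R) < (x + y)%:R by rewrite ltr0n addn_gt0 x_gt0.
have lex : log2 (x%:R : R) <= log2 (x + y)%:R by rewrite log2_le // ler_nat leq_addr.
have ley : log2 (y%:R : R) <= log2 (x + y)%:R by rewrite log2_le // ler_nat leq_addl.
have gains_ge1 : 1 + log2 (x%:R : R) + log2 y%:R <= 2 * log2 (x + y)%:R.
  have : ln (2 * (x%:R * y%:R)) <= ln ((x + y)%:R * (x + y)%:R : R).
    by rewrite ler_ln ?posrE ?mulr_gt0 // natrD; nra.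
  rewrite !lnM ?posrE ?mulr_gt0 // /log2 => le_ln.
  have inv2 : ln (2 : R) / ln 2 = 1 by rewrite mulfV // lt0r_neq0.
  have : 0 < (ln (2 : R))^-1 by rewrite invr_gt0.
  nra.
have [le_ab|lt_ba] := leP a b.
  have : 0 <= a * (2 * log2 (x + y)%:R - log2 x%:R - log2 y%:R - 1) by apply: mulr_ge0; lra.
  have : 0 <= (b - a) * (log2 (x + y)%:R - log2 y%:R) by apply: mulr_ge0; lra.
  lra.
have : 0 <= b * (2 * log2 (x + y)%:R - log2 x%:R - log2 y%:R - 1) by apply: mulr_ge0; lra.
have : 0 <= (a - b) * (log2 (x + y)%:R - log2 x%:R) by apply: mulr_ge0; lra.
lra.
Qed.

Lemma gcomp_setU1 (V : finType) (A : {set {set V}}) (a b z : V) :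
  gcomp (A :|: [set [set a; b]]) z =
  if z \in gcomp A a :|: gcomp A b then gcomp A a :|: gcomp A b else gcomp A z.
Proof.
set A' := _ :|: _; have sAA' : A \subset A' := subsetUl _ _.
have cab : gconn A' a b by apply: gconn_edge; rewrite !inE eqxx orbT.
apply/setP => y; rewrite !mem_gcomp; case: ifPn; rewrite !in_setU !mem_gcomp.
  move=> zab; apply/idP/idP.
    case/gconn_setU1/or3P=> [czy|/andP[_ cby]|/andP[_ cay]]; last by rewrite cay.
      by case/orP: zab => /gconn_trans/(_ czy) ->; rewrite ?orbT.
    by rewrite cby orbT.
  have cza : gconn A' z a.
    by rewrite gconnC; case/orP: zab => /(gconnS sAA') // cbz; apply: gconn_trans cab cbz.
  by case/orP=> /(gconnS sAA') cy; apply: gconn_trans cza _; [|apply: gconn_trans cab _].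
rewrite negb_or => /andP[nza nzb]; apply/idP/idP; last exact: gconnS.
case/gconn_setU1/or3P=> [//|/andP[cza _]|/andP[czb _]].
  by move: nza; rewrite gconnC cza.
by move: nzb; rewrite gconnC czb.
Qed.

Lemma setw_subset (R : realType) (V : finType) (h : {set V} -> R) (C D : {set {set V}}) :
  C \subset D -> (forall f, f \in D -> 0 <= h f) -> setw h C <= setw h D.
Proof.
move=> sCD h_ge0; rewrite [X in _ <= X](big_setID C) /= (setIidPr sCD) lerDl.
by apply: sumr_ge0 => f; rewrite inE => /andP[_ /h_ge0].
Qed.

Section Potential.
Variables (R : realType) (V : finType) (c : {set V} -> R) (F : {set {set V}}).
Hypothesis c_ge0 : forall f, f \in F -> 0 <= c f.
Implicit Types (A C : {set {set V}}) (S : {set V}) (x : V) (p : V * V).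

Definition fdeg x := \sum_(f in F | x \in f) c f.
Definition fdegS S := \sum_(x in S) fdeg x.
Definition potential A := \sum_x fdeg x * log2 #|gcomp A x|%:R.

Lemma fdeg_ge0 x : 0 <= fdeg x.
Proof. by apply: sumr_ge0 => f /andP[/c_ge0]. Qed.

Lemma fdegS_ge0 S : 0 <= fdegS S.
Proof. by apply: sumr_ge0 => x _; apply: fdeg_ge0. Qed.

Lemma fdegSE S : fdegS S = setw (fun f => #|f :&: S|%:R * c f) F.
Proof.
rewrite /fdegS /fdeg /setw.
under eq_bigr do rewrite big_mkcondr /=.
rewrite exchange_big /=; apply: eq_bigr => f _; rewrite -big_mkcondr /= mulr_natl -sumr_const.
by apply: eq_bigl => x; rewrite inE andbC.
Qed.

Lemma setw_le_fdegS C S : C \subset F -> (forall f, f \in C -> f :&: S != set0) ->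
  setw c C <= fdegS S.
Proof.
move=> sCF meetS; rewrite fdegSE.
apply: le_trans (@setw_subset _ _ (fun f => #|f :&: S|%:R * c f) _ _ sCF _); last first.
  by move=> f fF; rewrite mulr_ge0 ?c_ge0.
apply: ler_sum => f fC; rewrite ler_peMl ?c_ge0 ?(subsetP sCF) //.
by rewrite ler1n lt0n cards_eq0 meetS.
Qed.

Lemma sum_fdeg : simple_edges F -> \sum_x fdeg x = 2 * setw c F.
Proof.
move=> /forall_inP sF; have := fdegSE setT; rewrite /fdegS.
under eq_bigl do rewrite inE; move=> ->.
by rewrite /setw mulr_sumr; apply: eq_bigr => f /sF /eqP; rewrite setIT => ->.
Qed.

Lemma potential_set0 : potential set0 = 0.
Proof.
by rewrite /potential big1 // => x _; rewrite gcomp_set0 cards1 /log2 ln1 mul0r mulr0.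
Qed.

Lemma potential_gconnected A :
  gconnected A -> potential A = (\sum_x fdeg x) * log2 #|V|%:R.
Proof.
move=> cA; rewrite /potential mulr_suml; apply: eq_bigr => x _.
by rewrite gcomp_gconnected // cardsT.
Qed.

Lemma potential_step A p : ~~ gconn A p.1 p.2 ->
  Num.min (fdegS (gcomp A p.1)) (fdegS (gcomp A p.2))
    <= potential (kruskal_step A p) - potential A.
Proof.
case: p => a b /= nab; rewrite /kruskal_step /= (negbTE nab).
set X := gcomp A a; set Y := gcomp A b; pose L : R := log2 (#|X| + #|Y|)%:R.
have gcompX z : z \in X -> gcomp A z = X.
  by move=> zX; apply/eqP; rewrite eq_gcomp gconnC -mem_gcomp.
have gcompY z : z \in Y -> gcomp A z = Y.
  by move=> zY; apply/eqP; rewrite eq_gcomp gconnC -mem_gcomp.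
have XY0 : X :&: Y = set0.
  apply/setP => z; rewrite !inE; apply/negP => /andP[caz cbz].
  by move: nab; rewrite (gconn_trans caz) // gconnC.
have cardXY : #|X :|: Y| = (#|X| + #|Y|)%N by rewrite cardsU XY0 cards0 subn0.
have gain z : fdeg z * log2 #|gcomp (A :|: [set edge_of (a, b)]) z|%:R
                - fdeg z * log2 #|gcomp A z|%:R =
    (if z \in X then fdeg z * (L - log2 #|X|%:R) else 0) +
    (if z \in Y then fdeg z * (L - log2 #|Y|%:R) else 0).
  rewrite gcomp_setU1 -/X -/Y in_setU -mulrBr; have [zX|zX] /= := boolP (z \in X).
    have zY : z \notin Y by apply/negP => zY; have := in_set0 z; rewrite -XY0 inE zX zY.
    by rewrite (negbTE zY) cardXY gcompX // addr0.
  by case: ifP => zY; [rewrite cardXY gcompY // add0r | rewrite subrr mulr0 addr0].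
rewrite /potential -sumrB (eq_bigr _ (fun z _ => gain z)) big_split /= -!big_mkcond /=.
rewrite -!mulr_suml -/(fdegS X) -/(fdegS Y); apply: min_le_log2_gain; rewrite ?fdegS_ge0 //.
  by apply/card_gt0P; exists a; apply: gcomp_refl.
by apply/card_gt0P; exists b; apply: gcomp_refl.
Qed.

End Potential.

Lemma bigmin_id_or_attained (R : realDomainType) (I : finType) (P : pred I) (f : I -> R) d :
  \big[Num.min/d]_(i | P i) f i = d \/
  exists2 i, P i & \big[Num.min/d]_(i | P i) f i = f i.
Proof.
apply: (big_ind (fun v => v = d \/ exists2 i, P i & v = f i)) => [|x y|i Pi].
- by left.
- by case: (leP x y).
- by right; exists i.
Qed.

Section CrossCut.
Variables (R : realType) (V : finType) (E F : {set {set V}}) (w c : {set V} -> R).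
Implicit Types (A C : {set {set V}}) (S : {set V}) (u v : V) (W : R).

Lemma cross_edgesE S f : simple_edges E -> f \in cross_edges E S ->
  exists u v, [/\ f = [set u; v], u \in S & v \notin S].
Proof.
move=> /forall_inP sE; rewrite inE => /and3P[fE /set0Pn[u] + /set0Pn[v]].
rewrite !inE => /andP[uf uS] /andP[vS vf]; exists u, v; split => //.
apply/eqP; rewrite eq_sym eqEcard (eqP (sE f fE)) cards2 subUset !sub1set uf vf.
by rewrite /= ltnS lt0b; apply: contraNneq vS => <-.
Qed.

Definition cross_cut S W := [set f in F | (w f < W) && (f \in cross_edges E S)].

Lemma separating_cross_cut S W u v : F \subset E ->
  (forall x y, [set x; y] \in E :\: F -> w [set x; y] < W -> x \in S -> y \in S) ->
  u \in S -> v \notin S -> separating (edges_below w E W) (cross_cut S W) u v.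
Proof.
move=> sFE closedS uS vS; apply/andP; split.
  by apply/subsetP => f; rewrite !inE => /and3P[/(subsetP sFE) -> -> _].
apply: (closed_gconn (S := S)) => // x y.
rewrite /adj in_setD [_ \in edges_below _ _ _]inE => /andP[ncut /andP[xyE lt]] xS.
apply/negPn/negP => yS; have [xyF|xyF] := boolP ([set x; y] \in F).
  by move: ncut; rewrite inE xyF lt cross_edgesP.
by move: yS; rewrite (closedS x y) // inE xyF.
Qed.

Hypotheses (sE : simple_edges E) (c_gt0 : forall f, f \in E -> 0 < c f) (sFE : F \subset E).

Lemma cost_ge0 f : f \in F -> 0 <= c f.
Proof. by move/(subsetP sFE)/c_gt0/ltW. Qed.

Lemma cross_cut_sub S W : cross_cut S W \subset F.
Proof. by apply/subsetP => f; rewrite inE => /andP[]. Qed.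

Lemma setw_cross_cut_le_fdegS S W : setw c (cross_cut S W) <= fdegS c F S.
Proof.
apply: setw_le_fdegS; [exact: cost_ge0|exact: cross_cut_sub|].
by move=> f; rewrite !inE => /and3P[_ _ /and3P[_]].
Qed.

Lemma setw_cross_cut_le S W : setw c (cross_cut S W) <= setw c F.
Proof. by apply: setw_subset; [exact: cross_cut_sub|exact: cost_ge0]. Qed.

Lemma setw_gt0 C f : C \subset E -> f \in C -> 0 < setw c C.
Proof.
move=> sCE fC; rewrite /setw (bigD1 f) //= ltr_pwDl ?c_gt0 ?(subsetP sCE) //.
by apply: sumr_ge0 => g /andP[gC _]; apply/ltW/c_gt0/(subsetP sCE).
Qed.

Definition cut_witness (B alpha : R) (e : {set V}) (u v : V) (W : R) :=
  [/\ e \in E, e = [set u; v], u != v, (exists2 f, f \in E & W = w f) &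
      forall C, min_cost_sep c (edges_below w E W) C u v ->
        [/\ 0 < setw c C, setw c C <= B & (W - w e) / setw c C >= alpha]].

Lemma cut_witness_cross B alpha S W : setw c F <= B -> 0 <= alpha ->
  (forall x y, [set x; y] \in E :\: F -> w [set x; y] < W -> x \in S -> y \in S) ->
  (exists2 f, f \in E & W = w f) ->
  0 < W - min_cross_weight w E W S ->
  alpha * fdegS c F S <= W - min_cross_weight w E W S ->
  exists e u v, cut_witness B alpha e u v W.
Proof.
move=> cFB alpha_ge0 closedS Wweight gap_gt0 le_gap.
have [minW|[f fcross minf]] := bigmin_id_or_attained (fun f => f \in cross_edges E S) w W.
  by move: gap_gt0; rewrite /min_cross_weight minW subrr ltxx.
rewrite -/(min_cross_weight w E W S) in minf; rewrite minf in gap_gt0 le_gap.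
have [u [v [ef uS vS]]] := cross_edgesE sE fcross.
have fE : f \in E by move: fcross; rewrite inE => /andP[].
have uv : u != v by apply: contraNneq vS => <-.
exists f, u, v; split => // C [sepC minC]; have /andP[sCE ncC] := sepC.
have sepC0 := separating_cross_cut sFE closedS uS vS.
have leC := minC _ sepC0.
have fC : f \in C.
  apply: contraNT ncC => fC; apply: gconn_edge.
  by rewrite -ef !inE fC fE -subr_gt0.
have sCE' : C \subset E.
  by apply: subset_trans sCE _; apply/subsetP => g; rewrite inE => /andP[].
have cC_gt0 := setw_gt0 sCE' fC.
split => //; first exact: le_trans leC (le_trans (setw_cross_cut_le _ _) cFB).
rewrite ler_pdivlMr //; apply: le_trans le_gap.
exact/ler_wpM2l/(le_trans leC)/setw_cross_cut_le_fdegS.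
Qed.

End CrossCut.

Lemma exists_pos_dominating (R : realDomainType) (I : eqType) (r : seq I) (s t : I -> R) :
  (forall i, i \in r -> 0 <= s i) ->
  \sum_(i <- r) s i <= \sum_(i <- r) t i -> 0 < \sum_(i <- r) t i ->
  exists2 i, i \in r & 0 < t i /\ s i <= t i.
Proof.
move=> s_ge0 le_st sum_gt0.
have [j jr tj_gt0] : exists2 j, j \in r & 0 < t j.
  apply/hasP; apply: contraLR sum_gt0 => /hasPn t_le0.
  by rewrite -leNgt big_seq sumr_le0 // => i /t_le0; rewrite -leNgt.
pose heavy i := (0 < t i) && (s i <= t i).
have [/hasP[i ir /andP[]]|/hasPn light] := boolP (has heavy r); first by exists i.
have le_ts i : i \in r -> t i <= s i.
  move=> ir; have [ti_gt0|] := ltP 0 (t i); last by move/le_trans; apply; apply: s_ge0.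
  by move: (light i ir); rewrite /heavy ti_gt0 -ltNge => /ltW.
have : \sum_(i <- r) t i < \sum_(i <- r) s i.
  rewrite !(perm_big _ (perm_to_rem jr)) !big_cons; apply: ltr_leD.
    by move: (light j jr); rewrite /heavy tj_gt0 -ltNge.
  rewrite big_seq_cond [X in _ <= X]big_seq_cond.
  by apply: ler_sum => i /andP[/mem_rem /le_ts].
by rewrite ltNge le_st.
Qed.

Lemma sum_kruskal_merges_le (R : numDomainType) (V : finType)
    (Phi : {set {set V}} -> R) (g : {set {set V}} * (V * V) -> R) A ps :
  (forall A' p, ~~ gconn A' p.1 p.2 -> g (A', p) <= Phi (kruskal_step A' p) - Phi A') ->
  \sum_(m <- kruskal_merges A ps) g m <= Phi (kruskal A ps) - Phi A.
Proof.
move=> le_step; elim: ps A => /= [|p ps IH] A; first by rewrite big_nil subrr.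
rewrite big_cat /=; case: ifPn => cA.
  by rewrite big_nil add0r; move: (IH A); rewrite /kruskal_step cA.
rewrite big_seq1; apply: le_trans (lerD (le_step A p cA) (IH _)) _.
by rewrite addrC addrA subrK.
Qed.

Lemma sum_merge_min_fdegS_le (R : realType) (V : finType) (w c : {set V} -> R)
    (D F : {set {set V}}) :
  (forall f, f \in F -> 0 <= c f) -> simple_edges F -> simple_edges D -> gconnected D ->
  \sum_(m <- kruskal_merges set0 (sorted_pairs w D))
     Num.min (fdegS c F (gcomp m.1 m.2.1)) (fdegS c F (gcomp m.1 m.2.2))
    <= 2 * setw c F * log2 #|V|%:R.
Proof.
move=> c_ge0 sF sD cD; have /and3P[_ cT _] := spanning_tree_kruskal w sD cD.
apply: le_trans (sum_kruskal_merges_le (Phi := potential c F) set0 _ _) _.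
  exact: potential_step.
by rewrite potential_set0 subr0 (potential_gconnected c F cT) sum_fdeg.
Qed.

Section MergeWitness.
Variables (R : realType) (V : finType) (E F : {set {set V}}) (w c : {set V} -> R).
Variables (B alpha : R).
Hypotheses (sE : simple_edges E) (c_gt0 : forall f, f \in E -> 0 < c f)
  (sFE : F \subset E) (cFB : setw c F <= B) (alpha_ge0 : 0 <= alpha).

Let merges := kruskal_merges set0 (sorted_pairs w (E :\: F)).

Lemma merge_gcomp_closed A p z : (A, p) \in merges ->
  forall x y, [set x; y] \in E :\: F -> w [set x; y] < w (edge_of p) ->
  x \in gcomp A z -> y \in gcomp A z.
Proof.
move=> m x y xyG lt; rewrite !mem_gcomp => czx; apply: gconn_trans czx _.
apply: (kruskal_merges_sorted (sorted_pairs_sorted w _) m (q := (x, y))) => //.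
by rewrite mem_sorted_pairs.
Qed.

Lemma cut_witness_of_merge A p : (A, p) \in merges ->
  0 < w (edge_of p) - merge_threshold w E (A, p) ->
  alpha * Num.min (fdegS c F (gcomp A p.1)) (fdegS c F (gcomp A p.2))
    <= w (edge_of p) - merge_threshold w E (A, p) ->
  exists e u v, cut_witness E w c B alpha e u v (w (edge_of p)).
Proof.
move=> m gap_gt0 le_gap.
have [_ pG _] := mem_kruskal_merges m; rewrite mem_sorted_pairs in pG.
have pE : edge_of p \in E by move: pG; rewrite inE => /andP[].
have Wweight : exists2 f, f \in E & w (edge_of p) = w f by exists (edge_of p).
move: gap_gt0 le_gap; rewrite /merge_threshold /=.
set d := w (edge_of p); set X := gcomp A p.1; set Y := gcomp A p.2.
have witness z := cut_witness_cross sE c_gt0 sFE cFB alpha_ge0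
  (merge_gcomp_closed (z := z) m) Wweight.
have [le_XY|lt_YX] := leP (fdegS c F X) (fdegS c F Y) => gap_gt0 le_gap.
  apply: (witness p.1); first by apply: lt_le_trans gap_gt0 _; rewrite lerB // le_max lexx.
  by apply: le_trans le_gap _; rewrite lerB // le_max lexx.
apply: (witness p.2); first by apply: lt_le_trans gap_gt0 _; rewrite lerB // le_max lexx orbT.
by apply: le_trans le_gap _; rewrite lerB // le_max lexx orbT.
Qed.

End MergeWitness.

Theorem mainTheorem15 (R : realType) (V : finType) (E : {set {set V}})
  (w c : {set V} -> R) (F : {set {set V}}) (B P : R) :
  simple_edges E ->
  gconnected E ->
  (2 <= #|V|)%N ->
  (forall f, f \in E -> 0 <= w f) ->
  (forall f, f \in E -> 0 < c f) ->
  F \subset E ->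
  setw c F <= B ->
  gconnected (E :\: F) ->
  pH w E F = P -> 0 < P ->
  exists (e : {set V}) (u v : V) (W : R),
    [/\ e \in E, e = [set u; v], u != v,
        (exists2 f, f \in E & W = w f) &
        forall C, min_cost_sep c (edges_below w E W) C u v ->
          [/\ 0 < setw c C, setw c C <= B &
              (W - w e) / setw c C >= P / (2 * B * log2 (#|V|%:R))]].
Proof.
move=> sE cE le2V w_ge0 c_gt0 sFE cFB cG <- P_gt0.
have [x0 _] : exists x0 : V, x0 \in [set: V].
  by apply/set0Pn; rewrite -card_gt0 cardsT ltnW.
have [f0 f0F] : exists f0 : {set V}, f0 \in F.
  by apply/set0Pn; apply: contraTneq P_gt0 => ->; rewrite /pH setD0 subrr ltxx.
have B_gt0 : 0 < B by apply: lt_le_trans cFB; apply: setw_gt0 sFE f0F.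
have log_gt0 : 0 < log2 (#|V|%:R : R) by rewrite /log2 divr_gt0 ?ln_gt0 ?ltr1n.
have den_gt0 : 0 < 2 * B * log2 (#|V|%:R : R) by do 2 apply: mulr_gt0 => //.
set alpha := pH w E F / _; have alpha_ge0 : 0 <= alpha by apply/ltW/divr_gt0.
have c_ge0 := cost_ge0 c_gt0 sFE.
have P_le_gaps := pH_le_sum_merge_gaps x0 sE cE w_ge0 cG.
pose share m := alpha * Num.min (fdegS c F (gcomp m.1 m.2.1)) (fdegS c F (gcomp m.1 m.2.2)).
have shares_le_P :
    \sum_(m <- kruskal_merges set0 (sorted_pairs w (E :\: F))) share m <= pH w E F.
  rewrite -mulr_sumr -[X in _ <= X](divfK (lt0r_neq0 den_gt0)) ler_wpM2l //.
  apply: le_trans (sum_merge_min_fdegS_le _ c_ge0 _ (simple_edgesS _ sE) cG) _.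
  - exact: simple_edgesS sE.
  - exact: subsetDl.
  - by rewrite ler_pM2r // ler_pM2l.
have share_ge0 m : m \in kruskal_merges set0 (sorted_pairs w (E :\: F)) -> 0 <= share m.
  by move=> _; rewrite mulr_ge0 // le_min !fdegS_ge0.
have [[A p] mA [gap_gt0 le_gap]] := exists_pos_dominating share_ge0
  (le_trans shares_le_P P_le_gaps) (lt_le_trans P_gt0 P_le_gaps).
have [e [u [v cert]]] := cut_witness_of_merge sE c_gt0 sFE cFB alpha_ge0 mA gap_gt0 le_gap.
by exists e, u, v, (w (edge_of p)).
Qed.
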